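(* For every finite simple undirected graph $G$, the graph $\mathsf{TJ}_{\omega(G)}(G)$ does not contain a diamond ($K_4$ minus one edge) as an induced subgraph.
   Context: $\omega(G)$ is the maximum size of a clique of $G$. $\mathsf{TJ}_k(G)$ is the graph whose vertices are the cliques of $G$ of size $k$, two such cliques $C, C'$ being adjacent iff $|C \setminus C'| = |C' \setminus C| = 1$. *)

From mathcomp Require Import all_boot.
Set Implicit Arguments. Unset Strict Implicit. Unset Printing Implicit Defensive.

Definition simple_graph (T : finType) (e : rel T) : Prop :=
  symmetric e /\ irreflexive e.

Definition is_clique (T : finType) (e : rel T) (A : {set T}) : bool :=
  [forall x in A, forall y in A, (x != y) ==> e x y].

Definition clique_number (T : finType) (e : rel T) : nat :=
  \max_(A : {set T} | is_clique e A) #|A|.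

Definition TJ_vertex (T : finType) (e : rel T) (k : nat) (C : {set T}) : bool :=
  is_clique e C && (#|C| == k).

Definition TJ_adj (T : finType) (C C' : {set T}) : bool :=
  (#|C :\: C'| == 1) && (#|C' :\: C| == 1).

Definition TJ_induced_diamond (T : finType) (e : rel T) (k : nat)
    (a b c d : {set T}) : Prop :=
  [/\ [&& TJ_vertex e k a, TJ_vertex e k b, TJ_vertex e k c & TJ_vertex e k d],
      uniq [:: a; b; c; d],
      [&& TJ_adj a b, TJ_adj a c, TJ_adj a d, TJ_adj b c & TJ_adj b d]
    & ~~ TJ_adj c d].

From mathcomp Require Import all_boot.
From mathcomp Require Import zify.

Set Implicit Arguments.
Unset Strict Implicit.
Unset Printing Implicit Defensive.

(* Two adjacent maximum cliques A, B of TJ_omega differ by swapping x for y,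
   and x, y are non-adjacent since otherwise A :|: B would be a larger clique.
   Hence every common TJ-neighbour C of A and B contains A :&: B: a vertex
   s of A :&: B missing from C would be the only vertex that C drops from
   both A and B, forcing the non-adjacent x and y into C.  In a diamond
   a, b, c, d this gives a :&: b \subset c :&: d, so the distinct cliques c
   and d of size omega share omega - 1 vertices and are adjacent. *)

Lemma TJ_adj_cardsI (T : finType) (A B : {set T}) :
  TJ_adj A B -> (#|A :&: B|).+1 = #|A|.
Proof. by case/andP=> /eqP AB _; rewrite -(cardsID B A) AB addn1. Qed.

Lemma TJ_adj_of_cardsI (T : finType) (C D : {set T}) :
  #|C| = #|D| -> C != D -> #|C| <= (#|C :&: D|).+1 -> TJ_adj C D.
Proof.
move=> eqCD neqCD le_CI.
have CDn0 : #|C :\: D| != 0.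
  apply: contra neqCD; rewrite cards_eq0 setD_eq0 => subCD.
  by rewrite eqEcard subCD eqCD leqnn.
have := cardsID D C; have := cardsID C D; rewrite setIC.
by move=> *; apply/andP; split; apply/eqP; lia.
Qed.

Section MaximumCliques.

Variables (T : finType) (e : rel T).
Hypothesis e_sym : symmetric e.

Lemma cliqueP (A : {set T}) :
  reflect {in A &, forall x y, x != y -> e x y} (is_clique e A).
Proof.
apply: (iffP forallP) => [cliqueA x y xA yA nxy | cliqueA x].
  by move: (cliqueA x); rewrite xA => /forallP/(_ y); rewrite yA nxy.
apply/implyP=> xA; apply/forallP=> y; apply/implyP=> yA.
by apply/implyP; apply: cliqueA.
Qed.

Lemma clique_card_le (A : {set T}) : is_clique e A -> #|A| <= clique_number e.
Proof. exact: (@leq_bigmax_cond _ (is_clique e) (fun A : {set T} => #|A|)). Qed.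

Lemma cliqueU_swap (A B : {set T}) (x y : T) :
  is_clique e A -> is_clique e B -> A :\: B = [set x] -> B :\: A = [set y] ->
  e x y -> is_clique e (A :|: B).
Proof.
move=> /cliqueP cliqueA /cliqueP cliqueB AB BA exy.
have onlyA u : u \in A -> u \notin B -> u = x.
  by move=> uA uB; apply/set1P; rewrite -AB inE uA uB.
have onlyB u : u \in B -> u \notin A -> u = y.
  by move=> uB uA; apply/set1P; rewrite -BA inE uA uB.
have cross u v : u \in A -> v \in B -> u != v -> e u v.
  move=> uA vB nuv; case: (boolP (u \in B)) => uB; first exact: cliqueB.
  case: (boolP (v \in A)) => vA; first exact: cliqueA.
  by rewrite (onlyA u uA uB) (onlyB v vB vA).
apply/cliqueP=> u v; rewrite !inE => /orP[uA|uB] /orP[vA|vB] nuv.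
- exact: cliqueA.
- exact: cross.
- by rewrite e_sym cross // eq_sym.
- exact: cliqueB.
Qed.

Lemma max_clique_swap_nonedge (A B : {set T}) (x y : T) :
  is_clique e A -> is_clique e B -> #|A| = clique_number e ->
  A :\: B = [set x] -> B :\: A = [set y] -> ~~ e x y.
Proof.
move=> cliqueA cliqueB maxA AB BA; apply/negP=> exy.
have := clique_card_le (cliqueU_swap cliqueA cliqueB AB BA exy).
have := cardsUI A B; have := cardsID A B; rewrite setIC BA cards1; lia.
Qed.

Lemma max_clique_common_neighbor_subset (A B C : {set T}) :
  is_clique e A -> is_clique e B -> is_clique e C -> #|A| = clique_number e ->
  TJ_adj A B -> TJ_adj A C -> TJ_adj B C -> A :&: B \subset C.
Proof.
move=> cliqueA cliqueB /cliqueP cliqueC maxA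
  /andP[/cards1P[x AB] /cards1P[y BA]] /andP[/cards1P[u AC] _]
  /andP[/cards1P[v BC] _].
have nexy := max_clique_swap_nonedge cliqueA cliqueB maxA AB BA.
have /setDP[xA xB] : x \in A :\: B by rewrite AB set11.
have /setDP[yB yA] : y \in B :\: A by rewrite BA set11.
apply/subsetP=> s /setIP[sA sB]; apply: contraR nexy => sC.
have su : s = u by apply/set1P; rewrite -AC inE sA sC.
have sv : s = v by apply/set1P; rewrite -BC inE sB sC.
have xC : x \in C.
  apply: contraR xB => xC; have : x \in A :\: C by rewrite inE xC.
  by rewrite AC -su => /set1P->.
have yC : y \in C.
  apply: contraR yA => yC; have : y \in B :\: C by rewrite inE yC.
  by rewrite BC -sv => /set1P->.
by apply: cliqueC => //; apply: contraNneq xB => ->.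
Qed.

End MaximumCliques.

Theorem proposition4p3 (T : finType) (e : rel T) :
  simple_graph e ->
  forall a b c d : {set T},
    ~ TJ_induced_diamond e (clique_number e) a b c d.
Proof.
move=> [e_sym _] a b c d [].
rewrite /TJ_vertex => /and4P[/andP[ca /eqP ha] /andP[cb _]
  /andP[cc /eqP hc] /andP[cd /eqP hd]] uniq_abcd /and5P[ab ac ad bc bd] /negP[].
have sub_cd : a :&: b \subset c :&: d.
  have common_nbr := max_clique_common_neighbor_subset e_sym ca cb _ ha ab.
  by rewrite subsetI (common_nbr c cc ac bc) (common_nbr d cd ad bd).
apply: TJ_adj_of_cardsI.
- by rewrite hc hd.
- by apply: contraTneq uniq_abcd => ->; rewrite /= mem_seq1 eqxx !andbF.
- by rewrite hc -ha -(TJ_adj_cardsI ab) ltnS subset_leq_card.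
Qed.
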